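(* Let $n \geq 2$ be an integer and let $t$ be an integer with $3 \leq t \leq n+1$. Let $\mathbf{v} \in \mathbb{Z}^t$ be a vector whose first entry $\mathbf{v}(1)$ is nonzero. Then the set $T(n,t,\mathbf{v})$ is finite.
   Context: A nonzero polynomial in $\mathbb{R}[x]$ is real-rooted if all its complex roots are real. For $\mathbf{v}\in\mathbb{Z}^t$ with entries $\mathbf{v}(1),\dots,\mathbf{v}(t)$, $T(n,t,\mathbf{v})$ denotes the set of all real-rooted polynomials $p(x) = \sum_{i=0}^n a_i x^{n-i} \in \mathbb{Z}[x]$ of degree $n$ such that $a_{i-1} = \mathbf{v}(i)$ for all $i \in \{1,\dots,t\}$. *)

From mathcomp Require Import all_boot all_order all_algebra all_field.
Set Implicit Arguments. Unset Strict Implicit. Unset Printing Implicit Defensive.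
Import Order.TTheory GRing.Theory Num.Theory.
Local Open Scope ring_scope.

Definition real_rooted (p : {poly int}) : Prop :=
  p != 0 /\ forall z : algC, root (map_poly intr p) z -> z \is Num.real.

(* T(n,t,v): real-rooted p = sum_{i=0}^n a_i x^(n-i) in Z[x] of degree n with
   a_{i-1} = v(i) for i = 1..t.  Here v : 'I_t -> int, with v k standing for
   v(k+1), and a_k = p`_(n-k). *)
Definition T_set (n t : nat) (v : 'I_t -> int) (p : {poly int}) : Prop :=
  real_rooted p /\ size p = n.+1 /\
  forall k : 'I_t, p`_(n - k) = v k.

From mathcomp Require Import all_boot all_order all_algebra all_field.
From mathcomp Require Import ring zify.
Set Implicit Arguments. Unset Strict Implicit. Unset Printing Implicit Defensive.
Import Order.TTheory GRing.Theory Num.Theory.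
Local Open Scope ring_scope.

(* The roots r_1, ..., r_n of a real-rooted p = a0 x^n + a1 x^(n-1) + a2 x^(n-2) + ...
   are real and satisfy  sum r_i^2 = (a1/a0)^2 - 2 a2/a0,  a quantity fixed by v.
   So every root is bounded in terms of v, hence by Vieta so is every coefficient
   of p, and there are only finitely many integer polynomials of degree n with
   bounded coefficients. *)

Lemma coef_XsubC_mul (R : comNzRingType) (r : R) (q : {poly R}) i :
  (('X - r%:P) * q)`_i = (if i == 0%N then 0 else q`_i.-1) - r * q`_i.
Proof. by rewrite mulrBl coefB coefXM coefCM. Qed.

Lemma norm_coef_prod_XsubC_le (R : numDomainType) (rs : seq R) (M : R) :
  0 <= M -> {in rs, forall r, `|r| <= M} ->
  forall i, `|(\prod_(r <- rs) ('X - r%:P))`_i| <= (1 + M) ^+ size rs.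
Proof.
move=> M0; elim: rs => [|r rs IH] rsM i.
  by rewrite big_nil coef1 expr0; case: (i == 0%N); rewrite ?normr1 ?normr0.
have rM : `|r| <= M by apply: rsM; rewrite mem_head.
have {}IH : forall i, `|(\prod_(x <- rs) ('X - x%:P))`_i| <= (1 + M) ^+ size rs.
  by apply: IH => x xrs; apply: rsM; rewrite inE xrs orbT.
rewrite big_cons coef_XsubC_mul exprS mulrDl mul1r.
apply: le_trans (ler_normB _ _) (lerD _ _).
  by case: (i == 0%N); rewrite ?normr0 ?exprn_ge0 ?addr_ge0.
by rewrite normrM ler_pM.
Qed.

(* The factor ['X^2] shifts the three top coefficients to indices that exist
   for every [rs], so that the induction needs no case analysis on [size rs]. *)
Lemma top_coefs_X2_prod_XsubC (R : comNzRingType) (rs : seq R) :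
  let q := 'X^2 * \prod_(r <- rs) ('X - r%:P) in
  [/\ q`_(size rs).+2 = 1, q`_(size rs).+1 = - \sum_(r <- rs) r &
      q`_(size rs) *+ 2 = (\sum_(r <- rs) r) ^+ 2 - \sum_(r <- rs) r ^+ 2].
Proof.
elim: rs => [|r rs [IH2 IH1 IH0]] /=.
  by rewrite !big_nil mulr1 !coefXn /= oppr0 expr0n /= mul0rn addr0.
rewrite !big_cons mulrCA !coef_XsubC_mul /= IH2 IH1.
have -> : ('X^2 * \prod_(x <- rs) ('X - x%:P))`_(size rs).+3 = 0.
  by rewrite coefXnM /= nth_default // size_prod_XsubC subn2.
split; first by rewrite mulr0 subr0.
  by rewrite mulr1 opprD addrC.
rewrite mulrnBl IH0; ring.
Qed.

Lemma sum_sqr_prod_XsubC (R : comNzRingType) (rs : seq R) : (1 < size rs)%N ->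
  let q := \prod_(r <- rs) ('X - r%:P) in
  \sum_(r <- rs) r ^+ 2 = q`_(size rs).-1 ^+ 2 - q`_(size rs).-2 *+ 2.
Proof.
move=> rs2 q; have [_] := top_coefs_X2_prod_XsubC rs; rewrite !coefXnM -/q.
case: (size rs) rs2 => [|[|m]] //= _ e1 e2.
rewrite ?subSS ?subn0 in e1 e2; rewrite e1 e2 sqrrN; ring.
Qed.

Lemma sqr_le_sum_sqr (R : numDomainType) (rs : seq R) (r : R) :
  {in rs, forall x, x \is Num.real} -> r \in rs ->
  r ^+ 2 <= \sum_(x <- rs) x ^+ 2.
Proof.
move=> rs_real rrs; rewrite (big_rem r rrs) /= lerDl big_seq sumr_ge0 //.
by move=> x /mem_rem/rs_real x_real; rewrite -real_normK // exprn_ge0.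
Qed.

Lemma real_norm_le_1Dsqr (R : numDomainType) (x : R) :
  x \is Num.real -> `|x| <= 1 + x ^+ 2.
Proof.
move=> x_real; rewrite -real_normK //; have nx0 := normr_ge0 x.
have [nx1|nx1] := orP (real_leVge (ger0_real nx0) (@real1 R)).
  by rewrite (le_trans nx1) // lerDl exprn_ge0.
have sqr_ge : `|x| <= `|x| ^+ 2 by rewrite expr2 ler_peMl.
by rewrite (le_trans sqr_ge) // lerDr ler01.
Qed.

Lemma bounded_int_polys_enum (n N : nat) :
  exists s : seq {poly int}, forall p : {poly int},
    (size p <= n.+1)%N -> (forall i, `|p`_i| <= N%:Z) -> p \in s.
Proof.
exists [seq \poly_(i < n.+1) ((f (inord i) : nat)%:Z - N%:Z)
         | f : {ffun 'I_n.+1 -> 'I_(N + N).+1}] => p pn pN.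
apply/mapP; exists [ffun i : 'I_n.+1 => inord (absz (p`_i + N%:Z))];
  first by rewrite mem_enum.
apply/polyP => i; rewrite coef_poly; case: ltnP => [ltin|leni].
  by rewrite ffunE !inordK //; have := pN i; lia.
by rewrite nth_default // (leq_trans pn).
Qed.

Lemma real_rooted_prod_XsubC (p : {poly int}) : real_rooted p ->
  exists2 rs : seq algC, {in rs, forall z, z \is Num.real} &
    map_poly intr p = (lead_coef p)%:~R *: \prod_(z <- rs) ('X - z%:P).
Proof.
move=> [p0 p_real].
have [rs prs] := closed_field_poly_normal (map_poly intr p : {poly algC}).
rewrite (lead_coef_map_inj (@intr_inj algC) (mulr0z 1)) in prs.
exists rs => // z zrs; apply: p_real.
by rewrite prs rootZ ?root_prod_XsubC // intr_eq0 lead_coef_eq0 p0.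
Qed.

(* Newton's identity [p_2 = e_1^2 - 2 e_2] for the roots of a polynomial
   [a0 x^n + a1 x^(n-1) + a2 x^(n-2) + ...]. *)
Definition sum_sqr_roots (a0 a1 a2 : int) : algC :=
  (a1%:~R / a0%:~R) ^+ 2 - (a2%:~R / a0%:~R) *+ 2.

Lemma real_rooted_coef_bound (n : nat) (p : {poly int}) :
  (2 <= n)%N -> real_rooted p -> size p = n.+1 ->
  forall i, `|(p`_i)%:~R : algC|
    <= `|(p`_n)%:~R| * (2 + sum_sqr_roots p`_n p`_n.-1 p`_n.-2) ^+ n.
Proof.
move=> n2 p_rr sp; have [rs rs_real prs] := real_rooted_prod_XsubC p_rr.
set c : algC := (p`_n)%:~R; set q := \prod_(z <- rs) ('X - z%:P) in prs.
have lc : lead_coef p = p`_n by rewrite lead_coefE sp.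
have c0 : c != 0 by rewrite intr_eq0 -lc lead_coef_eq0 -size_poly_gt0 sp.
have coef_p k : (p`_k)%:~R = c * q`_k by rewrite -coef_map prs coefZ lc.
have srs : size rs = n.
  have := size_map_inj_poly (@intr_inj algC) (mulr0z 1) p.
  by rewrite prs size_scale ?lc // /q (size_prod_XsubC rs) sp => -[].
have coef_q k : q`_k = (p`_k)%:~R / c by rewrite coef_p mulrAC divff ?mul1r.
have S_eq : sum_sqr_roots p`_n p`_n.-1 p`_n.-2 = \sum_(r <- rs) r ^+ 2.
  by rewrite sum_sqr_prod_XsubC srs // !coef_q.
have rs_bound : {in rs, forall r, `|r| <= 1 + sum_sqr_roots p`_n p`_n.-1 p`_n.-2}.
  move=> r rrs; rewrite (le_trans (real_norm_le_1Dsqr (rs_real r rrs))) //.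
  by rewrite lerD2l S_eq sqr_le_sum_sqr.
have S0 : 0 <= sum_sqr_roots p`_n p`_n.-1 p`_n.-2.
  rewrite S_eq big_seq sumr_ge0 // => r /rs_real r_real.
  by rewrite -real_normK // exprn_ge0.
move=> i; rewrite coef_p normrM ler_wpM2l //.
have := norm_coef_prod_XsubC_le (addr_ge0 ler01 S0) rs_bound i.
by rewrite srs addrA.
Qed.

Theorem proposition2p9 (n t : nat) (v : 'I_t -> int)
  (hn : (2 <= n)%N) (ht3 : (3 <= t)%N) (htn : (t <= n.+1)%N)
  (hv1 : forall k : 'I_t, nat_of_ord k = 0%N -> v k != 0) :
  exists s : seq {poly int}, forall p : {poly int}, @T_set n t v p -> p \in s.
Proof.
pose k0 := Ordinal (ltnW (ltnW ht3)); pose k1 := Ordinal (ltnW ht3).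
pose k2 := Ordinal ht3.
pose B : algC := `|(v k0)%:~R| * (2 + sum_sqr_roots (v k0) (v k1) (v k2)) ^+ n.
have [s s_bounded] := bounded_int_polys_enum n (Num.bound B).
exists s => p [p_rr [sp p_top]]; apply: s_bounded => [|i]; first by rewrite sp.
have p_n : p`_n = v k0 by rewrite -(p_top k0) subn0.
have p_n1 : p`_n.-1 = v k1 by rewrite -(p_top k1) subn1.
have p_n2 : p`_n.-2 = v k2 by rewrite -(p_top k2) subn2.
have pB := real_rooted_coef_bound hn p_rr sp i.
rewrite p_n p_n1 p_n2 -/B in pB.
have /ltW := le_lt_trans pB (archi_boundP (le_trans (normr_ge0 _) pB)).
by rewrite -intr_norm pmulrn ler_int.
Qed.
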